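(* Let $\Omega\subset\mathbb{Z}_2^n\setminus\{\mathbf 0\}$ be nonempty and such that the Hamming weights $s(\beta)$, $\beta\in\Omega$, are either all even or all odd. Let $k=\min_{\beta\in\Omega}s(\beta)$ and let $H_\Omega(t)$ be the transition matrix of $\mathrm{NEPS}(P_3,\ldots,P_3;\Omega)$. Then $H_\Omega\!\left(\frac{2\pi}{(\sqrt2)^k}\right)=I$; that is, $\mathrm{NEPS}(P_3,\ldots,P_3;\Omega)$ is periodic at time $\frac{2\pi}{(\sqrt2)^k}$.
   Context: $P_3$ is the path on three vertices. For graphs $G_1,\dots,G_n$ and $\Omega\subset\mathbb{Z}_2^n\setminus\{\mathbf 0\}$, $\mathrm{NEPS}(G_1,\dots,G_n;\Omega)$ is the graph on $V(G_1)\times\cdots\times V(G_n)$ with adjacency matrix $\sum_{\beta\in\Omega}A_1^{\beta_1}\otimes\cdots\otimes A_n^{\beta_n}$, $A_i$ the adjacency matrix of $G_i$ (equivalently, $(x_i)$ and $(y_i)$ are adjacent iff for some $\beta\in\Omega$, $x_i=y_i$ when $\beta_i=0$ and $x_iy_i\in E(G_i)$ when $\beta_i=1$). The Hamming weight $s(\beta)$ is the number of entries of $\beta$ equal to $1$. The transition matrix of a graph with adjacency matrix $A$ is $H(t)=\exp(-itA)$. A graph is periodic at time $\tau\neq0$ if $H(\tau)=\gamma I$ for some $\gamma$ with $|\gamma|=1$. *)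

From mathcomp Require Import all_boot.
From Stdlib Require Import Reals.

Set Implicit Arguments.
Unset Strict Implicit.
Unset Printing Implicit Defensive.

Definition C := (R * R)%type.
Definition C0 : C := (0%R, 0%R).
Definition C1 : C := (1%R, 0%R).
Definition Cadd (a b : C) : C := ((fst a + fst b)%R, (snd a + snd b)%R).
Definition Cmul (a b : C) : C :=
  ((fst a * fst b - snd a * snd b)%R, (fst a * snd b + snd a * fst b)%R).
Definition RtoC (r : R) : C := (r, 0%R).

Definition Cconv (u : nat -> C) (l : C) : Prop :=
  Un_cv (fun N => fst (u N)) (fst l) /\ Un_cv (fun N => snd (u N)) (snd l).

Definition Csum (T : finType) (P : pred T) (f : T -> C) : C :=
  foldr (fun x acc => Cadd (f x) acc) C0 (enum P).
Definition Rsum (T : finType) (P : pred T) (f : T -> R) : R :=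
  foldr (fun x acc => (f x + acc)%R) 0%R (enum P).

Definition cmx (V : finType) := V -> V -> C.
Definition cmx1 (V : finType) : cmx V := fun x y => if x == y then C1 else C0.
Definition cmxmul (V : finType) (M N : cmx V) : cmx V :=
  fun x y => Csum predT (fun z => Cmul (M x z) (N z y)).
Fixpoint cmxpow (V : finType) (M : cmx V) (m : nat) : cmx V :=
  match m with
  | O => @cmx1 V
  | S m' => cmxmul (cmxpow M m') M
  end.
Definition cmxscale (V : finType) (c : C) (M : cmx V) : cmx V :=
  fun x y => Cmul c (M x y).

Fixpoint exp_partial (V : finType) (M : cmx V) (N : nat) : cmx V :=
  match N with
  | O => @cmx1 V
  | S N' => fun x y => Cadd (exp_partial M N' x y)
                          (Cmul (RtoC (/ INR (Factorial.fact N))) (cmxpow M N x y))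
  end.

Definition is_mexp (V : finType) (M : cmx V) (E : cmx V) : Prop :=
  forall x y, Cconv (fun N => exp_partial M N x y) (E x y).

Definition cmx_of_real (V : finType) (A : V -> V -> R) : cmx V :=
  fun x y => RtoC (A x y).

(* H(t) = exp(-i t A) is (equal to) Ht *)
Definition is_transition (V : finType) (A : V -> V -> R) (t : R) (Ht : cmx V)
  : Prop := is_mexp (cmxscale (0%R, (- t)%R) (cmx_of_real A)) Ht.

Definition P3_adj (a b : 'I_3) : bool :=
  (a.+1 == b :> nat) || (b.+1 == a :> nat).

Definition Z2n (n : nat) := {ffun 'I_n -> bool}.
Definition hamming (n : nat) (b : Z2n n) : nat := #|[pred i | b i]|.

Definition adjR (T : finType) (e : rel T) : T -> T -> R :=
  fun a b => if e a b then 1%R else 0%R.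

Definition adj_pow (T : finType) (e : rel T) (bi : bool) : T -> T -> R :=
  if bi then adjR e else (fun a b => if a == b then 1%R else 0%R).

Definition Rprod_ord (n : nat) (f : 'I_n -> R) : R :=
  foldr (fun i acc => (f i * acc)%R) 1%R (enum 'I_n).

(* adjacency matrix of NEPS(G,...,G; Omega) (n copies of G = (T, e)):
   sum_{beta in Omega} A^{beta_1} (x) ... (x) A^{beta_n} *)
Definition NEPS_adj (T : finType) (e : rel T) (n : nat) (Omega : {set Z2n n})
  : {ffun 'I_n -> T} -> {ffun 'I_n -> T} -> R :=
  fun x y => Rsum (mem Omega) (fun beta => Rprod_ord (fun i => adj_pow e (beta i) (x i) (y i))).

(* The adjacency matrix A of NEPS(P_3, ..., P_3; Omega) is diagonalized by tensor
   products of eigenvectors of P_3, whose eigenvalues are 0 and +-sqrt 2: the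
   eigenvector indexed by sigma has eigenvalue
     lambda_sigma = sum_(beta in Omega) prod_(i | beta_i) sqrt 2 * eps(sigma_i),
   eps in {0, 1, -1}, a sum of terms 0 or +-(sqrt 2)^s(beta).  All weights s(beta)
   are at least k and have the parity of k, so lambda_sigma is (sqrt 2)^k times an
   integer and t lambda_sigma is a multiple of 2 pi for t = 2 pi / (sqrt 2)^k.
   The partial sums of the exponential series of -itA are combinations, through
   the spectral projectors, of the scalar partial sums of exp(-i t lambda_sigma),
   whose real and imaginary parts are the cosine and sine series; hence
   exp(-itA) = sum_sigma exp(-i t lambda_sigma) P_sigma = sum_sigma P_sigma = I. *)

From Pilot Require Import Defs.
From mathcomp Require Import all_boot all_algebra.
From Stdlib Require Import Reals.
From mathcomp Require Import Rstruct ring lra.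

Set Implicit Arguments.
Unset Strict Implicit.
Unset Printing Implicit Defensive.

Import GRing.Theory Num.Theory.

Local Open Scope ring_scope.

(* [simpl] unfolds the MathComp operations on [R] to Stdlib's, which [ring] and
   [lra] do not recognize; this multirule folds them back. *)
Definition RopsE := (RplusE, RminusE, RmultE, RoppE, RinvE, RdivE, IZR_NEG, R0E, R1E).

Lemma Rsum_bigE (T : finType) (P : pred T) (f : T -> R) :
  Rsum P f = \sum_(x in P) f x.
Proof.
rewrite /Rsum -big_enum; elim: (enum P) => [|x s IH] /=; first by rewrite big_nil.
by rewrite big_cons IH.
Qed.

Lemma Rprod_ord_bigE n (f : 'I_n -> R) : Rprod_ord f = \prod_i f i.
Proof.
rewrite /Rprod_ord -big_enum; elim: (enum _) => [|x s IH] /=; first by rewrite big_nil.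
by rewrite big_cons IH.
Qed.

Lemma CmulE a b : Cmul a b = (a.1 * b.1 - a.2 * b.2, a.1 * b.2 + a.2 * b.1).
Proof. by []. Qed.

Lemma CaddE a b : Cadd a b = (a.1 + b.1, a.2 + b.2).
Proof. by []. Qed.

Lemma C0E : C0 = (0, 0). Proof. by []. Qed.
Lemma C1E : Defs.C1 = (1, 0). Proof. by []. Qed.
Lemma RtoCE r : RtoC r = (r, 0). Proof. by []. Qed.

Lemma RtoC_mul r z : Cmul (RtoC r) z = (r * z.1, r * z.2).
Proof. by rewrite CmulE RtoCE /=; congr pair; ring. Qed.

Lemma Csum_mul_RtoC (T : finType) (f : T -> Defs.C) (w : Defs.C) (g : T -> R) :
  (forall x, f x = Cmul w (RtoC (g x))) -> Csum predT f = Cmul w (RtoC (\sum_x g x)).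
Proof.
move=> fE; rewrite /Csum -big_enum /=.
elim: (enum predT) => [|x s IH]; rewrite ?big_nil ?big_cons /=.
  by rewrite C0E CmulE RtoCE /=; congr pair; ring.
by rewrite IH fE !CmulE CaddE !RtoCE /=; congr pair; ring.
Qed.

Fixpoint Cpow (z : Defs.C) (m : nat) : Defs.C :=
  if m is m'.+1 then Cmul (Cpow z m') z else Defs.C1.

Fixpoint Cexp_partial (z : Defs.C) (N : nat) : Defs.C :=
  if N is N'.+1 then
    Cadd (Cexp_partial z N') (Cmul (RtoC (INR (Factorial.fact N))^-1) (Cpow z N))
  else Defs.C1.

Lemma Cpow0 z : Cpow z 0 = (1, 0).
Proof. by []. Qed.

Lemma CpowS z m : Cpow z m.+1 = Cmul (Cpow z m) z.
Proof. by []. Qed.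

Lemma Cexp_partial0 z : Cexp_partial z 0 = (1, 0).
Proof. by []. Qed.

Lemma Cexp_partialS z N : Cexp_partial z N.+1 =
  ((Cexp_partial z N).1 + (INR (Factorial.fact N.+1))^-1 * (Cpow z N.+1).1,
   (Cexp_partial z N).2 + (INR (Factorial.fact N.+1))^-1 * (Cpow z N.+1).2).
Proof. by rewrite [LHS]/= RtoC_mul. Qed.

Lemma exp_partialS (V : finType) (M : cmx V) N x y :
  exp_partial M N.+1 x y =
  Cadd (exp_partial M N x y) (Cmul (RtoC (INR (Factorial.fact N.+1))^-1) (cmxpow M N.+1 x y)).
Proof. by []. Qed.

Lemma Cpow_RtoC_mul r z j : Cpow (Cmul (RtoC r) z) j = Cmul (RtoC (r ^+ j)) (Cpow z j).
Proof.
elim: j => [|j IH]; rewrite ?CpowS ?IH !RtoC_mul.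
  by rewrite /= C1E /= mulr1 mulr0.
by rewrite !CmulE /= exprS; congr pair; ring.
Qed.

Lemma Cpow_imagS th m :
  Cpow (0, - th) m.+1 = ((Cpow (0, - th) m).2 * th, - ((Cpow (0, - th) m).1 * th)).
Proof. by rewrite CpowS CmulE /=; congr pair; ring. Qed.

Lemma Cpow_imag_even_odd th K :
  Cpow (0, - th) K.*2 = ((-1) ^+ K * th ^+ K.*2, 0) /\
  Cpow (0, - th) K.*2.+1 = (0, - ((-1) ^+ K * th ^+ K.*2.+1)).
Proof.
elim: K => [|K [_ oddK]].
  by rewrite double0 Cpow_imagS Cpow0 /=; split; congr pair; rewrite ?expr0; ring.
have evenK1 : Cpow (0, - th) K.+1.*2 = ((-1) ^+ K.+1 * th ^+ K.+1.*2, 0).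
  by rewrite doubleS Cpow_imagS oddK /=; congr pair; rewrite ?exprS; ring.
by split=> //; rewrite Cpow_imagS evenK1 /=; congr pair; rewrite ?exprS; ring.
Qed.

(* [A1 th] and [B1 th] are Stdlib's partial sums of the cosine and sine series. *)
Lemma A1S th K :
  A1 th K.+1 = A1 th K + (-1) ^+ K.+1 / INR (Factorial.fact K.+1.*2) * th ^+ K.+1.*2.
Proof.
rewrite /A1 tech5; cbv beta.
by rewrite (_ : (2 * K.+1)%coq_nat = K.+1.*2) ?RpowE // -mul2n.
Qed.

Lemma B1S th K :
  B1 th K.+1 = B1 th K + (-1) ^+ K.+1 / INR (Factorial.fact K.+1.*2.+1) * th ^+ K.+1.*2.+1.
Proof.
rewrite /B1 tech5; cbv beta.
by rewrite (_ : (2 * K.+1 + 1)%coq_nat = K.+1.*2.+1) ?RpowE // -mul2n Nat.add_1_r.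
Qed.

Lemma Cexp_partial_re th K :
  (Cexp_partial (0, - th) K.*2).1 = A1 th K /\ (Cexp_partial (0, - th) K.*2.+1).1 = A1 th K.
Proof.
have oddS m : (Cexp_partial (0, - th) m.*2.+1).1 = (Cexp_partial (0, - th) m.*2).1.
  by rewrite Cexp_partialS (proj2 (Cpow_imag_even_odd th m)) /= mulr0 addr0.
rewrite oddS; suff -> : (Cexp_partial (0, - th) K.*2).1 = A1 th K by [].
elim: K => [|K IH]; first by rewrite /A1 /= ?RopsE divr1 mulr1.
have [evenK1 _] := Cpow_imag_even_odd th K.+1.
rewrite A1S -IH doubleS in evenK1 *.
by rewrite Cexp_partialS oddS evenK1 /=; ring.
Qed.

Lemma Cexp_partial_im th K :
  (Cexp_partial (0, - th) K.*2.+1).2 = - B1 th K /\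
  (Cexp_partial (0, - th) K.*2.+2).2 = - B1 th K.
Proof.
have evenS m : (Cexp_partial (0, - th) m.*2.+2).2 = (Cexp_partial (0, - th) m.*2.+1).2.
  have [evenm1 _] := Cpow_imag_even_odd th m.+1; rewrite doubleS in evenm1.
  by rewrite Cexp_partialS evenm1 /= mulr0 addr0.
rewrite evenS; suff -> : (Cexp_partial (0, - th) K.*2.+1).2 = - B1 th K by [].
elim: K => [|K IH]; first by rewrite /B1 /= ?RopsE invr1; ring.
have [_ oddK1] := Cpow_imag_even_odd th K.+1.
rewrite B1S doubleS in oddK1 *.
by rewrite Cexp_partialS evenS IH oddK1 /=; ring.
Qed.

Lemma Un_cv_even_odd (u a : nat -> R) l :
  (forall K, u K.*2 = a K) -> (forall K, u K.*2.+1 = a K) -> Un_cv a l -> Un_cv u l.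
Proof.
move=> u_even u_odd a_l e e_gt0; have [N aN] := a_l e e_gt0.
exists N.*2 => m /leP le_Nm.
have -> : u m = a m./2.
  by rewrite -[in LHS](odd_double_half m); case: (odd m); rewrite ?add0n ?add1n.
by apply: aN; apply/leP; rewrite -[N]doubleK half_leq.
Qed.

Lemma Cexp_partial_cos th : Un_cv (fun N => (Cexp_partial (0, - th) N).1) (cos th).
Proof.
apply: (Un_cv_even_odd (a := A1 th)) (A1_cvg th) => K; by case: (Cexp_partial_re th K).
Qed.

Lemma Cexp_partial_sin th : Un_cv (fun N => (Cexp_partial (0, - th) N).2) (- sin th).
Proof.
apply: (CV_shift _ 1); apply: (Un_cv_ext (fun N => (Cexp_partial (0, - th) N.+1).2)).
  by move=> N; rewrite Nat.add_1_r.
apply: (Un_cv_even_odd (a := fun K => - B1 th K)) (CV_opp _ _ (B1_cvg th)) => K;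
  by case: (Cexp_partial_im th K).
Qed.

Lemma Un_cv_big_sum (I : finType) (c : I -> R) (u : I -> nat -> R) (l : I -> R) :
  (forall i, Un_cv (u i) (l i)) -> Un_cv (fun N => \sum_i c i * u i N) (\sum_i c i * l i).
Proof.
move=> u_l; have cst r : Un_cv (fun=> r) r.
  by move=> e e_gt0; exists 0%N => m _; rewrite R_dist_eq.
elim: (index_enum I) => [|i s IH].
  by rewrite big_nil; apply: (Un_cv_ext (fun=> 0)) (cst 0) => N; rewrite big_nil.
rewrite big_cons; apply: (Un_cv_ext (fun N => c i * u i N + \sum_(j <- s) c j * u j N)).
  by move=> N; rewrite big_cons.
exact: CV_plus (CV_mult _ _ _ _ (cst _) (u_l i)) IH.
Qed.

Section SpectralTransition.

Variables (V I : finType) (A : V -> V -> R) (lam : I -> R) (c : I -> V -> V -> R).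
Hypothesis sum_c : forall x y, \sum_i c i x y = (x == y)%:R.
Hypothesis c_eigen : forall i x y, \sum_z c i x z * A z y = lam i * c i x y.

Lemma spectral_powerS j x y :
  \sum_z (\sum_i lam i ^+ j * c i x z) * A z y = \sum_i lam i ^+ j.+1 * c i x y.
Proof.
under eq_bigr do rewrite big_distrl /=.
rewrite exchange_big; apply: eq_bigr => i _ /=.
rewrite exprSr -mulrA -c_eigen big_distrr /=.
by apply: eq_bigr => z _; rewrite mulrA.
Qed.

Lemma cmxpow_spectral w j x y :
  cmxpow (cmxscale w (cmx_of_real A)) j x y =
  Cmul (Cpow w j) (RtoC (\sum_i lam i ^+ j * c i x y)).
Proof.
elim: j x y => [|j IH] x y.
  under eq_bigr do rewrite expr0 mul1r.
  rewrite sum_c Cpow0 /= /cmx1.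
  by case: eqP => _; rewrite ?C1E ?C0E CmulE RtoCE /=; congr pair; ring.
rewrite [LHS]/= /cmxmul (@Csum_mul_RtoC _ _ (Cpow w j.+1)
  (fun z => (\sum_i lam i ^+ j * c i x z) * A z y)) ?spectral_powerS // => z.
by rewrite IH CpowS /cmxscale /cmx_of_real !CmulE !RtoCE /=; congr pair; ring.
Qed.

Lemma exp_partial_spectral w N x y :
  exp_partial (cmxscale w (cmx_of_real A)) N x y =
  (\sum_i c i x y * (Cexp_partial (Cmul (RtoC (lam i)) w) N).1,
   \sum_i c i x y * (Cexp_partial (Cmul (RtoC (lam i)) w) N).2).
Proof.
elim: N => [|N IH].
  rewrite (eq_bigr (c ^~ x ^~ y)) => [|i _]; last by rewrite Cexp_partial0 mulr1.
  rewrite [X in (_, X)]big1 => [|i _]; last by rewrite Cexp_partial0 mulr0.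
  by rewrite sum_c /= /cmx1; case: eqP.
rewrite exp_partialS IH cmxpow_spectral CaddE RtoC_mul CmulE RtoCE; cbn [fst snd].
rewrite mulr0 subr0 mulr0 add0r !mulrA !big_distrr.
set u := Cpow w N.+1; set f := (INR _)^-1.
by congr pair; rewrite -big_split; apply: eq_bigr => i _;
  rewrite Cexp_partialS Cpow_RtoC_mul -/u -/f !RtoC_mul /=; ring.
Qed.

Lemma is_transition_spectral t :
  is_transition A t (fun x y =>
    (\sum_i c i x y * cos (t * lam i), - \sum_i c i x y * sin (t * lam i))).
Proof.
have argE i : Cmul (RtoC (lam i)) (0, - t) = (0, - (t * lam i)).
  by rewrite RtoC_mul /=; congr pair; ring.
move=> x y; split=> /=.
  apply: (Un_cv_ext (fun N => \sum_i c i x y * (Cexp_partial (0, - (t * lam i)) N).1)).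
    by move=> N; rewrite exp_partial_spectral /=; apply: eq_bigr => i _; rewrite argE.
  exact: Un_cv_big_sum (fun i => Cexp_partial_cos _).
rewrite -sumrN; under eq_bigr do rewrite -mulrN.
apply: (Un_cv_ext (fun N => \sum_i c i x y * (Cexp_partial (0, - (t * lam i)) N).2)).
  by move=> N; rewrite exp_partial_spectral /=; apply: eq_bigr => i _; rewrite argE.
exact: Un_cv_big_sum (fun i => Cexp_partial_sin _).
Qed.

Lemma is_transition_periodic t :
  (forall i, cos (t * lam i) = 1 /\ sin (t * lam i) = 0) -> is_transition A t (@cmx1 V).
Proof.
move=> trig x y; have := is_transition_spectral t x y.
under eq_bigr do rewrite (proj1 (trig _)) mulr1.
under [X in - X]eq_bigr do rewrite (proj2 (trig _)) mulr0.
by rewrite sum_c big1_eq oppr0 /cmx1; case: eqP.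
Qed.

End SpectralTransition.

Definition tensor (T S : finType) n (u : S -> T -> R)
    (σ : {ffun 'I_n -> S}) (x : {ffun 'I_n -> T}) : R :=
  \prod_i u (σ i) (x i).

Definition neps_eigenvalue (S : finType) n (eig : S -> bool -> R) (Om : {set Z2n n})
    (σ : {ffun 'I_n -> S}) : R :=
  \sum_(β in Om) \prod_i eig (σ i) (β i).

Section TensorEigenbasis.

Variables (T S : finType) (e : rel T) (vec dual : S -> T -> R) (eig : S -> bool -> R).
Hypothesis vec_eigen : forall s b a', \sum_a vec s a * adj_pow e b a a' = eig s b * vec s a'.
Hypothesis dual_vec_complete : forall a a', \sum_s dual s a * vec s a' = (a == a')%:R.
Variables (n : nat) (Om : {set Z2n n}).

Lemma NEPS_adjE x y :
  NEPS_adj e Om x y = \sum_(β in Om) \prod_i adj_pow e (β i) (x i) (y i).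
Proof. by rewrite /NEPS_adj Rsum_bigE; apply: eq_bigr => β _; rewrite Rprod_ord_bigE. Qed.

Lemma tensor_eigen (σ : {ffun 'I_n -> S}) y :
  \sum_x tensor vec σ x * NEPS_adj e Om x y = neps_eigenvalue eig Om σ * tensor vec σ y.
Proof.
under eq_bigr => x _ do rewrite NEPS_adjE big_distrr /=.
rewrite exchange_big /= /neps_eigenvalue big_distrl /=; apply: eq_bigr => β _.
under eq_bigr => x _ do rewrite /tensor -big_split /=.
rewrite -(bigA_distr_bigA (fun i a => vec (σ i) a * adj_pow e (β i) a (y i))) /=.
by rewrite -big_split /=; apply: eq_bigr => i _; exact: vec_eigen.
Qed.

Lemma tensor_dual_complete (x y : {ffun 'I_n -> T}) :
  \sum_σ tensor dual σ x * tensor vec σ y = (x == y)%:R.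
Proof.
under eq_bigr do rewrite /tensor -big_split /=.
rewrite -(bigA_distr_bigA (fun i s => dual s (x i) * vec s (y i))) /=.
under eq_bigr do rewrite dual_vec_complete.
case: eqVneq => [-> | neq_xy]; first by apply: big1 => i _; rewrite eqxx.
case: (pickP (fun i => x i != y i)) => [i neq_i | eq_xy].
  by rewrite (bigD1 i) //= (negbTE neq_i) mul0r.
by case/negP: neq_xy; apply/eqP/ffunP => i; apply/eqP/negbFE/eq_xy.
Qed.

Lemma is_transition_NEPS_periodic t :
  (forall σ, cos (t * neps_eigenvalue eig Om σ) = 1 /\
             sin (t * neps_eigenvalue eig Om σ) = 0) ->
  is_transition (NEPS_adj e Om) t (@cmx1 _).
Proof.
apply: (@is_transition_periodic _ _ _ _ (fun σ x y => tensor dual σ x * tensor vec σ y)).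
  exact: tensor_dual_complete.
move=> σ x y /=; rewrite mulrCA -tensor_eigen big_distrr /=.
by apply: eq_bigr => z _; rewrite mulrA.
Qed.

End TensorEigenbasis.

Lemma sqrt2_mul_self : sqrt 2 * sqrt 2 = 2.
Proof. by rewrite -RmultE sqrt_sqrt //; apply: Rlt_le Rlt_0_2. Qed.

Lemma sqrt2_neq0 : sqrt 2 != 0.
Proof. by apply/eqP => s0; have := sqrt2_mul_self; rewrite s0 mul0r; lra. Qed.

Definition p3_sign (s : 'I_3) : R := match val s with 0 => 0 | 1 => 1 | _ => - 1 end.

Definition p3_eig (s : 'I_3) (b : bool) : R := if b then sqrt 2 * p3_sign s else 1.

(* [p3_vec s] is the eigenvector of P_3 for the eigenvalue [sqrt 2 * p3_sign s]. *)
Definition p3_vec (s a : 'I_3) : R :=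
  match val s, val a with
  | 0, 0 => 1 | 0, 1 => 0 | 0, _ => - 1
  | 1, 1 => sqrt 2 | 2, 1 => - sqrt 2 | _, _ => 1
  end.

Definition p3_dual (s a : 'I_3) : R := p3_vec s a / (if val s == 0 then 2 else 4).

Lemma p3_vec_eigen s b a' :
  \sum_a p3_vec s a * adj_pow P3_adj b a a' = p3_eig s b * p3_vec s a'.
Proof.
have := sqrt2_mul_self; rewrite !big_ord_recr big_ord0 /=.
case: s => [[|[|[|s]]] lt_s3] //; case: a' => [[|[|[|a]]] lt_a3] //; case: b;
  rewrite /adj_pow /adjR /P3_adj /p3_vec /p3_eig /p3_sign /= ?RopsE => s2s2; nra.
Qed.

Lemma p3_dual_vec_complete a a' : \sum_s p3_dual s a * p3_vec s a' = (a == a')%:R.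
Proof.
have := sqrt2_mul_self; rewrite !big_ord_recr big_ord0 /=.
case: a => [[|[|[|a]]] lt_a3] //; case: a' => [[|[|[|a']]] lt_a'3] //;
  rewrite /p3_dual /p3_vec /= ?RopsE => s2s2; nra.
Qed.

Lemma sqrt2_expr_even m : ~~ odd m -> sqrt 2 ^+ m = 2 ^+ m./2.
Proof.
move=> even_m; rewrite -{1}(odd_double_half m) (negbTE even_m) add0n -mul2n.
by rewrite exprM expr2 sqrt2_mul_self.
Qed.

Lemma prod_p3_eig n (β : Z2n n) (σ : {ffun 'I_n -> 'I_3}) :
  \prod_i p3_eig (σ i) (β i) = sqrt 2 ^+ hamming β * \prod_(i | β i) p3_sign (σ i).
Proof.
rewrite (eq_bigr (fun i => (if β i then sqrt 2 else 1) * (if β i then p3_sign (σ i) else 1))).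
  by rewrite big_split -!big_mkcond prodr_const.
by move=> i _; rewrite /p3_eig; case: (β i); rewrite ?mulr1.
Qed.

Lemma p3_neps_eigenvalue_int n (Om : {set Z2n n}) (k : nat) (σ : {ffun 'I_n -> 'I_3}) :
  (forall β, β \in Om -> (k <= hamming β)%nat /\ ~~ odd (hamming β - k)%nat) ->
  neps_eigenvalue p3_eig Om σ / sqrt 2 ^+ k \is a Num.int.
Proof.
move=> weights; rewrite /neps_eigenvalue mulr_suml.
apply: rpred_sum => β /weights[le_k even_d].
rewrite prod_p3_eig -(subnKC le_k) exprD [sqrt 2 ^+ k * _]mulrC mulrAC mulfK; last first.
  exact: expf_neq0 sqrt2_neq0.
rewrite sqrt2_expr_even //; apply: rpredM; first exact/rpredX/natr_int.
apply: rpred_prod => i _; rewrite /p3_sign.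
by case: (val _) => [|[|?]]; rewrite ?rpredN ?rpred0 ?rpred1.
Qed.

Lemma cos_sin_two_pi_int x :
  x \is a Num.int -> cos (2 * PI * x) = 1 /\ sin (2 * PI * x) = 0.
Proof.
have nat_case m : cos (2 * PI * INR m) = 1 /\ sin (2 * PI * INR m) = 0.
  rewrite Rmult_assoc (Rmult_comm PI) -Rmult_assoc -(Rplus_0_l (_ * _ * PI)).
  by rewrite cos_period sin_period cos_0 sin_0.
rewrite intrE => /orP[/natrP[m ->] | /natrP[m /(canRL (@opprK _)) ->]].
  by rewrite -INRE; exact: nat_case.
rewrite -INRE -RoppE -Ropp_mult_distr_r cos_neg sin_neg.
by have [-> ->] := nat_case m; rewrite Ropp_0.
Qed.

Local Close Scope ring_scope.

Theorem theorem3p4 (n : nat) (Omega : {set Z2n n}) (k : nat) :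
  (forall beta, beta \in Omega -> beta != [ffun => false]) ->
  Omega != set0 ->
  (forall beta gamma, beta \in Omega -> gamma \in Omega ->
     odd (hamming beta) = odd (hamming gamma)) ->
  (exists2 beta, beta \in Omega & hamming beta = k) ->
  (forall beta, beta \in Omega -> (k <= hamming beta)%N) ->
  is_transition (NEPS_adj P3_adj Omega)
    (2 * PI / (sqrt 2) ^ k)%R
    (@cmx1 {ffun 'I_n -> 'I_3}).
Proof.
move=> _ _ parity [β0 β0_in hβ0] k_min.
have weights β : β \in Omega -> k <= hamming β /\ ~~ odd (hamming β - k).
  move=> β_in; split; first exact: k_min.
  by rewrite oddB ?k_min // -hβ0 (parity β β0) // addbb.
apply: (is_transition_NEPS_periodic p3_vec_eigen p3_dual_vec_complete) => σ.
rewrite /Rdiv Rmult_assoc (Rmult_comm (/ _)) RpowE.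
exact: cos_sin_two_pi_int (p3_neps_eigenvalue_int σ weights).
Qed.
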